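(* Let $\epsilon\ge0$ and fix any ordering $e_1,\dots,e_n$ of $V$. Let $S$ be the output of the algorithm that starts with $S=\emptyset$ and, for $i=1,\dots,n$, adds $e_i$ to $S$ if $|S|<k$ and $f(e_i\mid S)\ge\frac{1+\epsilon}{2}\cdot\frac{\mathrm{OPT}}{k}$. Let $\mathcal O$ be a set with $|\mathcal O|\le k$ and $f(\mathcal O)=\mathrm{OPT}$. If $|S\cap\mathcal O|\ge2\epsilon k$, then $f(S)\ge\frac{1+\epsilon}{2}\mathrm{OPT}$.
   Context: $V$ is a finite ground set with $|V|=n$; $f:2^V\to\mathbb{R}_{\ge0}$ is monotone, submodular and normalized; $f(e\mid Y)=f(Y\cup\{e\})-f(Y)$. $k$ is a positive integer and $\mathrm{OPT}=\max\{f(S):S\subseteq V,|S|\le k\}$ (known to the algorithm). *)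

From HB Require Import structures.
From mathcomp Require Import all_boot all_order all_algebra.
Set Implicit Arguments. Unset Strict Implicit. Unset Printing Implicit Defensive.
Import Order.TTheory GRing.Theory Num.Theory.
Local Open Scope ring_scope.

Section Defs.
Variables (R : realFieldType) (V : finType).

Definition marginal (f : {set V} -> R) (e : V) (Y : {set V}) : R :=
  f (e |: Y) - f Y.

Definition nonneg_fun (f : {set V} -> R) : Prop := forall A, 0 <= f A.
Definition normalized (f : {set V} -> R) : Prop := f set0 = 0.
Definition monotone (f : {set V} -> R) : Prop :=
  forall A B : {set V}, A \subset B -> f A <= f B.
Definition submodular (f : {set V} -> R) : Prop :=
  forall A B : {set V}, f (A :|: B) + f (A :&: B) <= f A + f B.

(* OPT = max { f S : |S| <= k }  (f >= 0 and set0 qualifies, so the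
   big max with default 0 is the true maximum) *)
Definition OPT (f : {set V} -> R) (k : nat) : R :=
  \big[Num.max/0]_(S : {set V} | (#|S| <= k)%N) f S.

Definition thr_step (f : {set V} -> R) (k : nat) (tau : R)
    (S : {set V}) (e : V) : {set V} :=
  if ((#|S| < k)%N) && (tau <= marginal f e S) then e |: S else S.

Definition threshold_alg (f : {set V} -> R) (k : nat) (eps : R)
    (s : seq V) : {set V} :=
  foldl (thr_step f k ((1 + eps) / 2 * (OPT f k / k%:R))) set0 s.

End Defs.

(* If the run stops with k elements, each accepted element gained at least
   tau = (1 + eps)/2 * OPT/k, so f(S) >= k tau.  Otherwise every element of
   O \ S was rejected while the budget was not exhausted, so by diminishing
   returns its marginal gain with respect to the final S is below tau; hence
   OPT = f(O) <= f(S) + |O \ S| tau, and |O \ S| <= (1 - 2 eps) k gives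
   f(S) >= (1 + eps + 2 eps^2)/2 * OPT. *)

From HB Require Import structures.
From mathcomp Require Import all_boot all_order all_algebra.
From mathcomp Require Import ring lra.
Set Implicit Arguments. Unset Strict Implicit. Unset Printing Implicit Defensive.
Import Order.TTheory GRing.Theory Num.Theory.
Local Open Scope ring_scope.

Section Submodularity.
Variables (R : realFieldType) (V : finType) (f : {set V} -> R).
Hypothesis f_mono : monotone f.
Hypothesis f_submod : submodular f.

Lemma marginal_antitone (e : V) (A B : {set V}) :
  A \subset B -> e \notin B -> marginal f e B <= marginal f e A.
Proof.
move=> sAB eNB; rewrite /marginal.
have eB0 : [set e] :&: B = set0.
  by apply/setP=> y; rewrite !inE; case: eqP => // ->; rewrite (negbTE eNB).
have := f_submod (e |: A) B.
rewrite -setUA (setUidPr sAB) setIUl eB0 set0U (setIidPl sAB); lra.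
Qed.

Lemma submod_union_le_sum_seq (S : {set V}) (t : seq V) :
  f (S :|: [set x in t]) <= f S + \sum_(e <- t) marginal f e S.
Proof.
elim: t => [|x t IH].
  rewrite big_nil addr0; have -> : [set x in [::]] = set0 :> {set V}.
    by apply/setP => y; rewrite !inE.
  by rewrite setU0.
rewrite big_cons.
have -> : S :|: [set y in x :: t] = (x |: S) :|: (S :|: [set y in t]).
  by apply/setP => y; rewrite !inE; case: (y == x); case: (y \in S).
have := f_submod (x |: S) (S :|: [set y in t]).
have : f S <= f ((x |: S) :&: (S :|: [set y in t])).
  by apply: f_mono; rewrite subsetI subsetUr subsetUl.
rewrite /marginal; lra.
Qed.

Lemma submod_union_le_sum (S T : {set V}) :
  f (S :|: T) <= f S + \sum_(e in T) marginal f e S.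
Proof.
have enumTK : [set x in enum T] = T by apply/setP => y; rewrite inE mem_enum.
by rewrite -big_enum -{1}enumTK submod_union_le_sum_seq.
Qed.

End Submodularity.

Section ThresholdRun.
Variables (R : realFieldType) (V : finType) (f : {set V} -> R).
Variables (k : nat) (tau : R).

Local Notation run := (foldl (thr_step f k tau)).

Lemma thr_step_sub (S : {set V}) (e : V) : S \subset thr_step f k tau S e.
Proof. by rewrite /thr_step; case: ifP => _; rewrite ?subsetUr. Qed.

Lemma run_sub (S : {set V}) (s : seq V) : S \subset run S s.
Proof.
elim: s S => [|x s IH] S /=; first exact: subxx.
exact: subset_trans (thr_step_sub S x) (IH _).
Qed.

Hypothesis f_mono : monotone f.

Lemma thr_step_gain (S : {set V}) (e : V) :
  f S + tau * #|thr_step f k tau S e|%:R <= f (thr_step f k tau S e) + tau * #|S|%:R.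
Proof.
rewrite /thr_step; case: ifP => [/andP[_] | _]; last lra.
rewrite /marginal cardsU1; case: (e \in S) => /= gain.
  have := f_mono (subsetUr [set e] S); rewrite add0n; lra.
rewrite add1n -addn1 natrD; lra.
Qed.

Lemma run_gain (S : {set V}) (s : seq V) :
  f S + tau * #|run S s|%:R <= f (run S s) + tau * #|S|%:R.
Proof.
elim: s S => [|x s IH] S /=; first lra.
have := IH (thr_step f k tau S x); have := thr_step_gain S x; lra.
Qed.

Lemma run_value_full (s : seq V) :
  normalized f -> 0 <= tau -> (k <= #|run set0 s|)%N -> tau * k%:R <= f (run set0 s).
Proof.
move=> f0 tau_ge0 full; have := run_gain set0 s.
rewrite cards0 f0 mulr0 add0r addr0; apply: le_trans.
by rewrite ler_wpM2l // ler_nat.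
Qed.

Hypothesis f_submod : submodular f.

Lemma run_rejected (S : {set V}) (s : seq V) (e : V) :
  e \in s -> e \notin run S s -> (#|run S s| < k)%N ->
  marginal f e (run S s) < tau.
Proof.
elim: s S => [|x s IH] S //=; rewrite inE => /orP[/eqP-> | es] eNrun notfull;
  last exact: IH.
have step_run := run_sub (thr_step f k tau S x) s.
have S_run := subset_trans (thr_step_sub S x) step_run.
case accept: ((#|S| < k)%N && (tau <= marginal f x S)).
  have : x \in thr_step f k tau S x by rewrite /thr_step accept setU11.
  by move/(subsetP step_run); rewrite (negbTE eNrun).
move: accept => /negbT; rewrite negb_and -ltNge => /orP[Sfull | gain].
  by have := leq_ltn_trans (subset_leq_card S_run) notfull; rewrite (negbTE Sfull).
by apply: le_lt_trans gain; apply: marginal_antitone.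
Qed.

Lemma run_value_partial (s : seq V) (O : {set V}) :
  {subset O <= s} -> (#|run set0 s| < k)%N ->
  f O <= f (run set0 s) + #|O :\: run set0 s|%:R * tau.
Proof.
move=> Os notfull; set S := run set0 s.
have rejected : forall e, e \in O :\: S -> marginal f e S <= tau.
  move=> e; rewrite inE => /andP[eNS eO].
  by apply/ltW/run_rejected => //; exact: Os.
apply: le_trans (f_mono (subsetUl O S)) _.
have -> : O :|: S = S :|: (O :\: S).
  by apply/setP => y; rewrite !inE; case: (y \in O); case: (y \in S).
apply: le_trans (submod_union_le_sum f_mono f_submod S (O :\: S)) _.
by rewrite lerD2l mulr_natl -sumr_const; apply: ler_sum.
Qed.

End ThresholdRun.

Lemma threshold_bound_arith (R : realFieldType) (P fS kR m eps : R) :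
  0 <= P -> 0 <= kR -> 0 <= eps -> m <= kR - 2 * eps * kR ->
  kR * P <= fS + m * ((1 + eps) / 2 * P) ->
  (1 + eps) / 2 * (kR * P) <= fS.
Proof.
move=> P_ge0 kR_ge0 eps_ge0 m_le bound.
have gap_le : m * ((1 + eps) * P) <= (kR - 2 * eps * kR) * ((1 + eps) * P).
  by apply: ler_wpM2r => //; apply: mulr_ge0 => //; lra.
have sq_ge0 : 0 <= kR * P * (eps * eps) by rewrite !mulr_ge0.
lra.
Qed.

Theorem mainTheorem12 (R : realFieldType) (V : finType)
    (f : {set V} -> R) (k : nat) (eps : R) (s : seq V) (O : {set V}) :
  nonneg_fun f -> monotone f -> submodular f -> normalized f ->
  (0 < k)%N -> 0 <= eps ->
  perm_eq s (enum V) ->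
  (#|O| <= k)%N -> f O = OPT f k ->
  2 * eps * k%:R <= (#|threshold_alg f k eps s :&: O|)%:R ->
  (1 + eps) / 2 * OPT f k <= f (threshold_alg f k eps s).
Proof.
move=> f_ge0 f_mono f_submod f0 k_gt0 eps_ge0 s_perm O_le_k fO overlap.
rewrite /threshold_alg -fO in overlap *.
set P := f O / k%:R; set S := foldl _ set0 s in overlap *.
have kR_gt0 : 0 < k%:R :> R by rewrite ltr0n.
have fOE : f O = k%:R * P by rewrite /P mulrC divfK ?gt_eqF.
have P_ge0 : 0 <= P by rewrite /P divr_ge0 // ltW.
have tau_ge0 : 0 <= (1 + eps) / 2 * P by apply: mulr_ge0 => //; lra.
rewrite fOE; have [full | notfull] := leqP k #|S|.
  by rewrite mulrCA mulrC; apply: run_value_full.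
apply: (threshold_bound_arith (m := #|O :\: S|%:R) P_ge0 (ltW kR_gt0) eps_ge0).
  have : (#|O :&: S| + #|O :\: S| <= k)%N by rewrite cardsID.
  by rewrite -(ler_nat R) natrD setIC; lra.
rewrite -fOE; apply: run_value_partial => // e _.
by rewrite (perm_mem s_perm) mem_enum.
Qed.
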